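(* Let $S$ be a Boolean inverse monoid and $A$ a unital C*-algebra. A map $\pi:S\to A$ is a Boolean inverse monoid representation of $S$ if and only if $\pi$ is a tight representation of $S$.
   Context: An inverse semigroup is a semigroup $S$ in which every $s$ has a unique $s^*$ with $ss^*s=s$ and $s^*ss^*=s^*$; all inverse semigroups are assumed countable and to have a zero element $0$ ($0s=s0=0$). $E(S)=\{e\in S: e^2=e\}$ is a commutative subsemigroup. The natural partial order is $s\le t$ iff $ts^*s=s$; for idempotents $e\le f$ iff $ef=e$. Elements $s,t$ are compatible if $s^*t,st^*\in E(S)$. $S$ is distributive if every finite compatible subset $F$ has a join $\bigvee F$ in the natural order and $t(\bigvee_{s\in F}s)=\bigvee_{s\in F}ts$, $(\bigvee_{s\in F}s)t=\bigvee_{s\in F}st$ for all $t\in S$. A Boolean inverse monoid is a distributive inverse semigroup with identity $1$ such that $E(S)$, with the natural order, is a Boolean algebra ($e^\perp$ denotes the complement). A representation of $S$ in a unital C*-algebra $A$ is a map $\pi:S\to A$ with $\pi(0)=0$, $\pi(st)=\pi(s)\pi(t)$, $\pi(s^* )=\pi(s)^*$. A Boolean inverse monoid representation is a representation that additionally satisfies $\pi(s\vee t)=\pi(s)+\pi(t)-\pi(ss^*t)$ for all compatible $s,t\in S$. For finite $X,Y\subseteq E(S)$ let $E(S)^{X,Y}=\{e\in E(S): e\le x\ \forall x\in X,\ ey=0\ \forall y\in Y\}$. For $Z\subseteq W\subseteq E(S)$, $Z$ is a cover of $W$ if for every nonzero $w\in W$ there is $z\in Z$ with $zw\neq0$. A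 representation $\pi$ is tight if for all finite $X,Y,Z\subseteq E(S)$ with $Z\subseteq E(S)^{X,Y}$ a cover of $E(S)^{X,Y}$ one has $\bigvee_{z\in Z}\pi(z)=\prod_{x\in X}\pi(x)\prod_{y\in Y}(1-\pi(y))$, where for commuting projections $p\vee q=p+q-pq$ and empty products equal $1$.
   Formalization: A Boolean inverse monoid representation π also sends the identity of S to the unit of A, that is π(1) = 1. The statement above fails without it. *)

From Stdlib Require Import List.
From HB Require Import structures.
From mathcomp Require Import all_boot all_order all_algebra.
Set Implicit Arguments. Unset Strict Implicit. Unset Printing Implicit Defensive.
Import GRing.Theory.
Local Open Scope ring_scope.

Record InverseSemigroup := {
  is_car :> Type;
  is_mul : is_car -> is_car -> is_car;
  is_star : is_car -> is_car;
  is_zero : is_car;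
  is_assoc : forall a b c, is_mul a (is_mul b c) = is_mul (is_mul a b) c;
  is_inv1 : forall s, is_mul (is_mul s (is_star s)) s = s;
  is_inv2 : forall s, is_mul (is_mul (is_star s) s) (is_star s) = is_star s;
  is_inv_uniq : forall s t, is_mul (is_mul s t) s = s ->
                  is_mul (is_mul t s) t = t -> t = is_star s;
  is_zero_l : forall s, is_mul is_zero s = is_zero;
  is_zero_r : forall s, is_mul s is_zero = is_zero;
  is_countable : exists f : is_car -> nat, injective f
}.

Section InvSemigroupDefs.
Variable S : InverseSemigroup.
Local Notation "a ** b" := (is_mul a b) (at level 40, left associativity).
Local Notation "s ^*" := (is_star s).
Local Notation z0 := (is_zero S).

Definition idem (e : S) : Prop := e ** e = e.

Definition nle (s t : S) : Prop := t ** (s^* ** s) = s.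

Definition compatible (s t : S) : Prop := idem (s^* ** t) /\ idem (s ** t^*).

Definition is_join (F : seq S) (j : S) : Prop :=
  (forall s, Stdlib.Lists.List.In s F -> nle s j) /\
  (forall u, (forall s, Stdlib.Lists.List.In s F -> nle s u) -> nle j u).

Definition compatible_set (F : seq S) : Prop :=
  forall s t, Stdlib.Lists.List.In s F -> Stdlib.Lists.List.In t F -> compatible s t.

Definition distributive_isg : Prop :=
  forall F : seq S, compatible_set F ->
    exists j, is_join F j /\
      forall t, is_join (map (fun s => t ** s) F) (t ** j) /\
                is_join (map (fun s => s ** t) F) (j ** t).

Definition is_lub_in (P : S -> Prop) (le : S -> S -> Prop) (x y j : S) : Prop :=
  P j /\ le x j /\ le y j /\ (forall u, P u -> le x u -> le y u -> le j u).
Definition is_glb_in (P : S -> Prop) (le : S -> S -> Prop) (x y m : S) : Prop :=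
  P m /\ le m x /\ le m y /\ (forall u, P u -> le u x -> le u y -> le u m).

Definition is_boolean_algebra (P : S -> Prop) (le : S -> S -> Prop) : Prop :=
  (forall x, P x -> le x x) /\
  (forall x y, P x -> P y -> le x y -> le y x -> x = y) /\
  (forall x y w, P x -> P y -> P w -> le x y -> le y w -> le x w) /\
  (forall x y, P x -> P y -> exists j, is_lub_in P le x y j) /\
  (forall x y, P x -> P y -> exists m, is_glb_in P le x y m) /\
  (* distributive: x /\ (y \/ w) = (x /\ y) \/ (x /\ w) *)
  (forall x y w j m a b c, P x -> P y -> P w ->
     is_lub_in P le y w j -> is_glb_in P le x j m ->
     is_glb_in P le x y a -> is_glb_in P le x w b -> is_lub_in P le a b c ->
     m = c) /\
  exists bot top, P bot /\ P top /\
    (forall x, P x -> le bot x /\ le x top) /\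
    (forall x, P x -> exists y, P y /\ is_glb_in P le x y bot /\ is_lub_in P le x y top).

Definition is_boolean_inverse_monoid (one : S) : Prop :=
  (forall s, one ** s = s /\ s ** one = s) /\
  distributive_isg /\
  is_boolean_algebra idem nle.

Definition EXY (X Y : seq S) (e : S) : Prop :=
  idem e /\ (forall x, Stdlib.Lists.List.In x X -> nle e x) /\ (forall y, Stdlib.Lists.List.In y Y -> e ** y = z0).

Definition is_cover (Z : seq S) (W : S -> Prop) : Prop :=
  (forall z, Stdlib.Lists.List.In z Z -> W z) /\
  (forall w, W w -> w <> z0 -> exists z, Stdlib.Lists.List.In z Z /\ z ** w <> z0).

Variable A : pzRingType.
Variable astar : A -> A.

Definition is_representation (pi : S -> A) : Prop :=
  pi z0 = 0 /\
  (forall s t, pi (s ** t) = pi s * pi t) /\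
  (forall s, pi (s^*) = astar (pi s)).

Definition is_BIM_representation (one : S) (pi : S -> A) : Prop :=
  is_representation pi /\ pi one = 1 /\
  (forall s t j, compatible s t -> is_join [:: s; t] j ->
     pi j = pi s + pi t - pi (s ** s^* ** t)).

(** join of commuting projections, p \/ q = p + q - p q, iterated *)
Definition pjoin (p q : A) : A := p + q - p * q.
Definition bigpjoin (ps : seq A) : A := foldr pjoin 0 ps.

Definition is_tight_representation (pi : S -> A) : Prop :=
  is_representation pi /\
  forall X Y Z : seq S,
    (forall x, Stdlib.Lists.List.In x X -> idem x) ->
    (forall y, Stdlib.Lists.List.In y Y -> idem y) ->
    (forall z, Stdlib.Lists.List.In z Z -> idem z) ->
    is_cover Z (EXY X Y) ->
    bigpjoin (map pi Z) = (\prod_(x <- X) pi x) * (\prod_(y <- Y) (1 - pi y)).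

End InvSemigroupDefs.

Definition is_star_ring (A : pzRingType) (astar : A -> A) : Prop :=
  (forall x, astar (astar x) = x) /\
  (forall x y, astar (x + y) = astar x + astar y) /\
  (forall x y, astar (x * y) = astar y * astar x) /\
  astar 1 = 1.

From Stdlib Require Import List Classical.
From mathcomp Require Import all_boot all_order all_algebra.
Import GRing.Theory.
Local Open Scope ring_scope.

(* The idempotents of a Boolean inverse monoid form a Boolean algebra whose meet is
   the product, so E(S)^{X,Y} has a largest element e, the product of X and of the
   complements of Y; a Boolean inverse monoid representation sends e to
   prod pi(x) * prod (1 - pi(y)) and a finite join of idempotents to the iterated
   p + q - pq. The join of a cover Z of E(S)^{X,Y} is exactly e, since otherwise e minus
   that join would be a nonzero element of E(S)^{X,Y} orthogonal to Z: this is tightness.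
   Conversely, tightness for the cover {1} of E(S) gives pi(1) = 1, and for the cover
   {s^*s, t^*t} of the idempotents below j^*j, where j = s \/ t, it gives
   pi(j^*j) = pi(s^*s) \/ pi(t^*t); multiplying on the left by pi(j) gives the join
   formula. *)

Local Notation "a ** b" := (is_mul a b) (at level 40, left associativity).
Local Notation "s ^*" := (is_star s).

Section InverseSemigroupTheory.

Context {S : InverseSemigroup}.
Implicit Types s t u w e f : S.
Local Notation z0 := (is_zero S).

Lemma starK s : s^*^* = s.
Proof. by symmetry; apply: is_inv_uniq; [apply: is_inv2 | apply: is_inv1]. Qed.

Lemma idem_starE {e} : idem e -> e^* = e.
Proof. by rewrite /idem => he; symmetry; apply: is_inv_uniq; rewrite !he. Qed.

Lemma idem_starl s : idem (s^* ** s).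
Proof. by rewrite /idem is_assoc is_inv2. Qed.

Lemma idem_starr s : idem (s ** s^*).
Proof. by have := idem_starl s^*; rewrite starK. Qed.

Lemma mul_eq_ctx {s t u} : s ** t = u -> forall w, w ** s ** t = w ** u.
Proof. by move=> h w; rewrite -is_assoc h. Qed.

Lemma idem_mul {e f} : idem e -> idem f -> idem (e ** f).
Proof.
rewrite /idem => he hf.
have hc : f ** (e ** f)^* ** e = (e ** f)^*.
  apply: is_inv_uniq.
  - rewrite !is_assoc (mul_eq_ctx hf) (mul_eq_ctx he) -(is_assoc _ e f).
    exact: is_inv1.
  - rewrite !is_assoc (mul_eq_ctx he) (mul_eq_ctx hf) -(is_assoc _ e f).
    by rewrite -(is_assoc f _ (e ** f)) -(is_assoc f _ (e ** f)^*) is_inv2.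
have hb : idem (e ** f)^*.
  rewrite /idem -[X in X ** _]hc -[X in _ ** X]hc !is_assoc -(is_assoc _ e f).
  by rewrite -(is_assoc f _ (e ** f)) -(is_assoc f _ (e ** f)^*) is_inv2.
by rewrite -(starK (e ** f)) idem_starE.
Qed.

Lemma idem_comm {e f} : idem e -> idem f -> e ** f = f ** e.
Proof.
move=> he hf; have hef := idem_mul he hf; have hfe := idem_mul hf he.
rewrite -{1}(idem_starE hef); symmetry; apply: is_inv_uniq.
- by rewrite !is_assoc (mul_eq_ctx hf) (mul_eq_ctx he) -(is_assoc _ e f).
- by rewrite !is_assoc (mul_eq_ctx he) (mul_eq_ctx hf) -(is_assoc _ f e).
Qed.

Lemma star_mul s t : (s ** t)^* = t^* ** s^*.
Proof.
have K := idem_comm (idem_starr t) (idem_starl s).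
symmetry; apply: is_inv_uniq.
- transitivity (s ** (t ** t^* ** (s^* ** s)) ** t); first by rewrite !is_assoc.
  by rewrite K !is_assoc is_inv1 -!is_assoc (is_assoc t) is_inv1.
- transitivity (t^* ** (s^* ** s ** (t ** t^*)) ** s^*); first by rewrite !is_assoc.
  rewrite -K !is_assoc -(starK t) is_inv2 starK.
  by rewrite -!is_assoc (is_assoc s^*) is_inv2.
Qed.

Lemma idem0 : idem z0.
Proof. exact: is_zero_l. Qed.

Lemma nle_idemE {e} s : idem e -> nle e s <-> s ** e = e.
Proof. by move=> he; rewrite /nle (idem_starE he) he. Qed.

Lemma nle_refl s : nle s s.
Proof. by rewrite /nle is_assoc is_inv1. Qed.

Lemma nle_anti {s t} : nle s t -> nle t s -> s = t.
Proof.
rewrite /nle => hst hts; have K := idem_comm (idem_starl t) (idem_starl s).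
by rewrite -{1}hst -{1}hts -is_assoc K is_assoc (is_assoc s s^* s) is_inv1.
Qed.

Lemma nle0s s : nle z0 s.
Proof. by rewrite /nle (idem_starE idem0) !is_zero_r. Qed.

Lemma idem_nle {e s} : idem e -> nle s e -> idem s.
Proof. by move=> he; rewrite /nle => <-; apply: idem_mul => //; apply: idem_starl. Qed.

Lemma nle_starl {s j} : nle s j -> nle (s^* ** s) (j^* ** j).
Proof.
move=> hsj; apply/(nle_idemE _ (idem_starl s)); move: hsj; rewrite /nle => hsj.
have K := idem_comm (idem_starl j) (idem_starl s).
have hs : s^* = s^* ** s ** j^* by rewrite -{1}hsj star_mul (idem_starE (idem_starl s)).
have H : s^* ** (j ** (s^* ** s)) = s^* ** s by rewrite hsj.
rewrite {1}hs in H; rewrite K.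
transitivity (s^* ** s ** (j^* ** j) ** (s^* ** s)).
  by rewrite -(is_assoc (s^* ** s) (j^* ** j)) K (is_assoc (s^* ** s) (s^* ** s)) (idem_starl s).
by rewrite !is_assoc in H *.
Qed.

Lemma mul_eq0_starl {s w} : s^* ** s ** w = z0 -> s ** w = z0.
Proof. by move=> h; rewrite -(is_inv1 s) -!is_assoc (is_assoc s^*) h is_zero_r. Qed.

Lemma is_join_uniq {F : seq S} {j1 j2} : is_join F j1 -> is_join F j2 -> j1 = j2.
Proof. by move=> [u1 l1] [u2 l2]; apply: nle_anti; [apply: l1 | apply: l2]. Qed.

Lemma join0s s : is_join [:: z0; s] s.
Proof.
split; last by move=> v hv; apply: hv => /=; tauto.
by move=> t /= [<-|[<-|[]]]; [apply: nle0s | apply: nle_refl].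
Qed.

Lemma joins0 s : is_join [:: s; z0] s.
Proof.
split; last by move=> v hv; apply: hv => /=; tauto.
by move=> t /= [<-|[<-|[]]]; [apply: nle_refl | apply: nle0s].
Qed.

Lemma compatible_idem {e f} : idem e -> idem f -> compatible e f.
Proof. by move=> he hf; rewrite /compatible !idem_starE //; split; apply: idem_mul. Qed.

Lemma compatible_refl s : compatible s s.
Proof. by split; [apply: idem_starl | apply: idem_starr]. Qed.

Lemma compatible_sym {s t} : compatible s t -> compatible t s.
Proof.
move=> [h1 h2]; split.
- by have := idem_starE h1; rewrite star_mul starK => ->.
- by have := idem_starE h2; rewrite star_mul starK => ->.
Qed.

Lemma compatible_set2 {s t} : compatible s t -> compatible_set [:: s; t].
Proof.
move=> h a b /= ha hb.
by case: ha => [<-|[<-|[]]]; case: hb => [<-|[<-|[]]];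
  [apply: compatible_refl | | apply: compatible_sym | apply: compatible_refl].
Qed.

Lemma compatible_meet {s t} : compatible s t -> s ** (t^* ** t) = s ** s^* ** t.
Proof.
move=> [hb ha].
have E1 : t ** s^* = s ** t^* by have := idem_starE ha; rewrite star_mul starK.
have E2 : t^* ** s = s^* ** t by have := idem_starE hb; rewrite star_mul starK.
have K := idem_comm (idem_starl s) (idem_starl t).
transitivity (s ** (s^* ** s ** (t^* ** t))); first by rewrite !is_assoc is_inv1.
rewrite K; transitivity (s ** t^* ** (t ** s^*) ** s); first by rewrite !is_assoc.
by rewrite E1 ha -is_assoc E2 is_assoc.
Qed.

Lemma EXY_mull {X Y : seq S} {e f} :
  (forall x, In x X -> idem x) -> idem f -> EXY X Y e -> EXY X Y (f ** e).
Proof.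
move=> hX hf [he [heX heY]]; have hfe := idem_mul hf he.
split=> //; split=> [x hx | y hy]; last by rewrite -is_assoc heY // is_zero_r.
apply/(nle_idemE _ hfe); have hxe : x ** e = e by apply/(nle_idemE _ he); apply: heX.
by rewrite is_assoc (idem_comm (hX x hx) hf) -is_assoc hxe.
Qed.

End InverseSemigroupTheory.

Section BooleanInverseMonoid.

Context {S : InverseSemigroup} {one : S}.
Implicit Types s t w e f j : S.
Local Notation z0 := (is_zero S).
Hypothesis oneP : forall s, one ** s = s /\ s ** one = s.
Hypothesis S_distr : distributive_isg S.
Hypothesis E_boolean : is_boolean_algebra (@idem S) (@nle S).

Lemma idem_one : idem one.
Proof. exact: (oneP one).1. Qed.

Lemma nle_one {e} : idem e -> nle e one.
Proof. by move=> he; apply/(nle_idemE _ he); apply: (oneP e).1. Qed.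

Lemma join2_exists {s t} : compatible s t -> exists j, is_join [:: s; t] j.
Proof. by move=> hst; have [j [hj _]] := S_distr _ (compatible_set2 hst); exists j. Qed.

Lemma join2_mull {s t j} : compatible s t -> is_join [:: s; t] j ->
  forall u, is_join [:: u ** s; u ** t] (u ** j).
Proof.
move=> hst hj; have [j' [hj' hdistr]] := S_distr _ (compatible_set2 hst).
by rewrite (is_join_uniq hj hj') => u; apply: (hdistr u).1.
Qed.

Lemma join2_mulr {s t j} : compatible s t -> is_join [:: s; t] j ->
  forall u, is_join [:: s ** u; t ** u] (j ** u).
Proof.
move=> hst hj; have [j' [hj' hdistr]] := S_distr _ (compatible_set2 hst).
by rewrite (is_join_uniq hj hj') => u; apply: (hdistr u).2.
Qed.

Lemma idem_join2 {e f j} : idem e -> idem f -> is_join [:: e; f] j -> idem j.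
Proof.
move=> he hf hj; apply: (idem_nle idem_one); apply: hj.2.
by move=> s /= [<-|[<-|[]]]; apply: nle_one.
Qed.

Lemma complement {e} : idem e ->
  exists e', idem e' /\ e ** e' = z0 /\ forall w, is_join [:: w ** e; w ** e'] w.
Proof.
move: E_boolean => [_ [_ [_ [_ [_ [_ [bot [top [_ [_ [hbt hcompl]]]]]]]]]]] he.
have bot0 : bot = z0 by have := (hbt _ (@idem0 S)).1; rewrite /nle is_zero_l.
have top1 : top = one.
  have /(nle_idemE _ idem_one) := (hbt _ idem_one).2.
  by rewrite (oneP top).2.
have [e' [he' [[_ [_ [_ hglb]]] [_ [_ [_ hlub]]]]]] := hcompl e he.
have hee' := idem_mul he he'.
exists e'; split=> //; split.
  have /(nle_idemE _ hee') : nle (e ** e') bot.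
    apply: hglb => //; apply/(nle_idemE _ hee').
    - by rewrite is_assoc he.
    - by rewrite (idem_comm he he') is_assoc he'.
  by rewrite bot0 is_zero_l.
have hcomp := compatible_idem he he'.
have [j hj] := join2_exists hcomp.
have j1 : j = one.
  apply: nle_anti; first exact: nle_one (idem_join2 he he' hj).
  rewrite -top1; apply: hlub; first exact: idem_join2 he he' hj.
  - by apply: hj.1; left.
  - by apply: hj.1; right; left.
by move=> w; have := join2_mull hcomp hj w; rewrite j1 (oneP w).2.
Qed.

(* Whatever lies under [j^* j] and misses [s^* s] and [t^* t] is killed by [s] and [t],
   hence by their join [j]. *)
Lemma join2_source_cover {s t j} : compatible s t -> is_join [:: s; t] j ->
  is_cover [:: s^* ** s; t^* ** t] (EXY [:: j^* ** j] [::]).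
Proof.
move=> hst hj; split.
  have hsj : nle s j by apply: hj.1; left.
  have htj : nle t j by apply: hj.1; right; left.
  move=> z [<-|[<-|[]]]; (split; first exact: idem_starl); split=> // x [<-|[]];
    exact: nle_starl.
move=> w [hw [hwj _]] hw0; apply: NNPP => hmiss; apply: hw0.
have hjw : j^* ** j ** w = w by apply/(nle_idemE _ hw); apply: hwj; left.
have hsw : s ** w = z0.
  by apply: mul_eq0_starl; apply: NNPP => h; apply: hmiss; exists (s^* ** s); split=> //; left.
have htw : t ** w = z0.
  by apply: mul_eq0_starl; apply: NNPP => h; apply: hmiss; exists (t^* ** t); split=> //; right; left.
have := join2_mulr hst hj w; rewrite hsw htw => /(is_join_uniq (join0s _)) jw0.
by rewrite -hjw -is_assoc -jw0 is_zero_r.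
Qed.

Section BIMRepresentation.

Variables (A : pzRingType) (astar : A -> A) (pi : S -> A).
Hypothesis pi_bim : is_BIM_representation astar one pi.

Let pi0 : pi z0 = 0. Proof. by case: pi_bim => [[]]. Qed.
Let pi_mul s t : pi (s ** t) = pi s * pi t. Proof. by case: pi_bim => [[_ []]]. Qed.
Let pi_one : pi one = 1. Proof. by case: pi_bim => _ []. Qed.

Lemma pi_join2_idem {e f j} : idem e -> idem f -> is_join [:: e; f] j ->
  pi j = pjoin (pi e) (pi f).
Proof.
move=> he hf hj; have [_ [_ pi_join]] := pi_bim.
by rewrite (pi_join _ _ _ (compatible_idem he hf) hj) (idem_starE he) he pi_mul.
Qed.

Lemma complement_pi {e} : idem e -> exists e', [/\ idem e', e' ** e = z0,
  pi e' = 1 - pi e & forall w, w ** e = z0 -> w ** e' = w].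
Proof.
move=> he; have [e' [he' [hee' hjoin]]] := complement he.
exists e'; split=> //; first by rewrite (idem_comm he' he).
  have := hjoin one; rewrite !(oneP _).1 => hj.
  rewrite -pi_one (pi_join2_idem he he' hj) /pjoin -pi_mul hee' pi0.
  by rewrite subr0 addrAC subrr add0r.
by move=> w hw; have := hjoin w; rewrite hw => /(is_join_uniq (join0s _)).
Qed.

Lemma meet_seq {X : seq S} : (forall x, In x X -> idem x) ->
  exists m, [/\ idem m, pi m = \prod_(x <- X) pi x, forall x, In x X -> x ** m = m
    & forall w, idem w -> (forall x, In x X -> x ** w = w) -> w ** m = w].
Proof.
elim: X => [_ | x X IH hX].
  exists one; split; [exact: idem_one | by rewrite big_nil | by [] |].
  by move=> w _ _; apply: (oneP w).2.
have hx : idem x by apply: hX; left.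
have [m [hm pm hmX hmax]] := IH (fun y h => hX y (or_intror h)).
exists (x ** m); split; [exact: idem_mul | by rewrite pi_mul big_cons pm | |].
- move=> y [<-|hy]; first by rewrite is_assoc hx.
  by rewrite is_assoc -(idem_comm hx (hX y (or_intror hy))) -is_assoc hmX.
- move=> w hw hwX; rewrite is_assoc (idem_comm hw hx) hwX; last by left.
  by apply: hmax => // y hy; apply: hwX; right.
Qed.

Lemma compl_meet_seq {Y : seq S} : (forall y, In y Y -> idem y) ->
  exists c, [/\ idem c, pi c = \prod_(y <- Y) (1 - pi y), forall y, In y Y -> c ** y = z0
    & forall w, (forall y, In y Y -> w ** y = z0) -> w ** c = w].
Proof.
elim: Y => [_ | y Y IH hY].
  exists one; split; [exact: idem_one | by rewrite big_nil | by [] |].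
  by move=> w _; apply: (oneP w).2.
have hy : idem y by apply: hY; left.
have [c [hc pc hcY hcmax]] := IH (fun x h => hY x (or_intror h)).
have [y' [hy' hy'y py' hy'max]] := complement_pi hy.
exists (y' ** c); split; [exact: idem_mul | by rewrite pi_mul big_cons py' pc | |].
- move=> x [<-|hx]; last by rewrite -is_assoc hcY // is_zero_r.
  by rewrite (idem_comm hy' hc) -is_assoc hy'y is_zero_r.
- move=> w hwY; rewrite is_assoc hy'max; last by apply: hwY; left.
  by apply: hcmax => x hx; apply: hwY; right.
Qed.

Lemma EXY_max {X Y : seq S} :
  (forall x, In x X -> idem x) -> (forall y, In y Y -> idem y) ->
  exists e, [/\ pi e = (\prod_(x <- X) pi x) * \prod_(y <- Y) (1 - pi y), EXY X Y e
    & forall w, EXY X Y w -> w ** e = w].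
Proof.
move=> hX hY.
have [m [hm pm hmX hmmax]] := meet_seq hX.
have [c [hc pc hcY hcmax]] := compl_meet_seq hY.
have hmc := idem_mul hm hc.
exists (m ** c); split; first by rewrite pi_mul pm pc.
- split=> //; split=> [x hx | y hy]; last by rewrite -is_assoc hcY // is_zero_r.
  by apply/(nle_idemE _ hmc); rewrite is_assoc hmX.
- move=> w [hw [hwX hwY]]; rewrite is_assoc hmmax //; first exact: hcmax.
  by move=> x hx; apply/(nle_idemE _ hw); apply: hwX.
Qed.

Lemma join_seq {Z : seq S} {e} : idem e -> (forall z, In z Z -> idem z /\ e ** z = z) ->
  exists j, [/\ idem j, pi j = bigpjoin (map pi Z), forall z, In z Z -> j ** z = z
    & e ** j = j].
Proof.
move=> he; elim: Z => [_ | z Z IH hZ].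
  by exists z0; split; [exact: idem0 | rewrite pi0 | by [] | apply: is_zero_r].
have [hz hez] := hZ z (or_introl erefl).
have [j [hj pj hjZ hej]] := IH (fun y h => hZ y (or_intror h)).
have [J hJ] := join2_exists (compatible_idem hz hj).
have hJi := idem_join2 hz hj hJ.
exists J; split=> //; first by rewrite (pi_join2_idem hz hj hJ) pj.
- have hJj : J ** j = j by apply/(nle_idemE _ hj); apply: hJ.1; right; left.
  move=> y [<-|hy]; first by apply/(nle_idemE _ hz); apply: hJ.1; left.
  by rewrite -(hjZ _ hy) is_assoc hJj.
- apply/(nle_idemE _ hJi); apply: hJ.2 => s [<-|[<-|[]]].
  + by apply/(nle_idemE _ hz).
  + by apply/(nle_idemE _ hj).
Qed.

Lemma BIM_tight : is_tight_representation astar pi.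
Proof.
split; first exact: pi_bim.1.
move=> X Y Z hX hY hZ [hZE hcov].
have [e [pe heE emax]] := EXY_max hX hY.
have he : idem e := heE.1.
have hZe z : In z Z -> idem z /\ e ** z = z.
  move=> hz; have hzE := hZE z hz; split; first exact: hzE.1.
  by rewrite (idem_comm he hzE.1); apply: emax.
have [j [hj pj hjZ hej]] := join_seq he hZe.
have [j' [hj' [hjj' hjoin]]] := complement hj.
case: (classic (j' ** e = z0)) => [hj'e | hj'e].
  have := hjoin e; rewrite hej (idem_comm he hj') hj'e => /(is_join_uniq (joins0 _)) je.
  by rewrite -pj -pe je.
have [z [hz]] := hcov _ (EXY_mull hX hj' heE) hj'e; case.
have hzj : z ** j = z by rewrite (idem_comm (hZe z hz).1 hj); apply: hjZ.
by rewrite is_assoc -hzj -(is_assoc z j j') hjj' is_zero_r is_zero_l.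
Qed.

End BIMRepresentation.

Section TightRepresentation.

Variables (A : pzRingType) (astar : A -> A) (pi : S -> A).
Hypothesis pi_tight : is_tight_representation astar pi.

Lemma tight_pi_one : pi one = 1.
Proof.
have := pi_tight.2 [::] [::] [:: one].
rewrite /= /pjoin !big_nil mulr1 mulr0 subr0 addr0; apply=> [x [] | y [] | z [<-|[]] |].
- exact: idem_one.
- split=> [z [<-|[]] | w _ hw0].
  + by split; [exact: idem_one | split=> x []].
  + by exists one; split; [left | rewrite (oneP w).1].
Qed.

Lemma tight_BIM : is_BIM_representation astar one pi.
Proof.
have [[_ [pi_mul _]] tight] := pi_tight.
split; [exact: pi_tight.1 | split; first exact: tight_pi_one].
move=> s t j hst hj.
have hsj : nle s j by apply: hj.1; left.
have htj : nle t j by apply: hj.1; right; left.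
have hjj : bigpjoin (map pi [:: s^* ** s; t^* ** t]) =
    (\prod_(x <- [:: j^* ** j]) pi x) * \prod_(y <- [::]) (1 - pi y).
  apply: (tight _ _ _ _ _ _ (join2_source_cover hst hj))
    => [x [<-|[]] | y [] | z [<-|[<-|[]]]]; apply: idem_starl.
move: hjj; rewrite /= /pjoin !big_cons !big_nil mulr0 subr0 addr0 !mulr1 => hjj.
have -> : pi j = pi j * pi (j^* ** j) by rewrite -pi_mul is_assoc is_inv1.
by rewrite -hjj mulrBr mulrDr mulrA -!pi_mul hsj htj -(compatible_meet hst).
Qed.

End TightRepresentation.

End BooleanInverseMonoid.

Theorem mainTheorem1 (S : InverseSemigroup) (one : S)
  (hS : is_boolean_inverse_monoid one)
  (A : pzRingType) (astar : A -> A) (hA : is_star_ring astar)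
  (pi : S -> A) :
  is_BIM_representation astar one pi <-> is_tight_representation astar pi.
Proof.
have [oneP [S_distr E_boolean]] := hS.
split=> hpi; [exact: BIM_tight oneP S_distr E_boolean A astar pi hpi
             | exact: tight_BIM oneP S_distr A astar pi hpi].
Qed.
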